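(* Let $(\mathfrak S_A,\mathfrak E_A,\epsilon^{\mathfrak S_A})$ and $(\mathfrak S_B,\mathfrak E_B,\epsilon^{\mathfrak S_B})$ be States/Effects Chu spaces, $\Phi\in\mathfrak S_A\widetilde{\otimes}\mathfrak S_B$ and $\mathfrak l_A\in\mathfrak E_A$ with $\Phi(\mathfrak l_A,\mathfrak Y_{\mathfrak E_B})=Y$. Then for every $\mathfrak l_B\in\mathfrak E_B$, $$(\Phi(\mathfrak l_A,\mathfrak l_B),\Phi(\mathfrak l_A,\overline{\mathfrak l_B}))\in\{(Y,N),(N,Y),(\bot,\bot)\}.$$
   Context: The boolean domain is $\mathfrak{B}=\{Y,N,\bot\}$, ordered by $u\le v$ iff $u=\bot$ or $u=v$; nonempty infima $\bigwedge$: $Y$ (resp. $N$) if all members are $Y$ (resp. $N$), else $\bot$. Product $\bullet$: $x\bullet Y=x$, $x\bullet N=N$, $\bot\bullet\bot=\bot$ (commutative); involution $\overline{\bot}=\bot$, $\overline{Y}=N$, $\overline{N}=Y$. A space of states is a poset $(\mathfrak S,\sqsubseteq)$ with bottom $\bot_{\mathfrak S}$ in which every nonempty subset has an infimum. The natural space of effects $\mathfrak E_{\mathfrak S}$ consists of formal symbols $\mathfrak l_{(\sigma,\sigma')}$ ($\sigma,\sigma'$ with no common upper bound), $\mathfrak l_{(\sigma,\cdot)}$, $\mathfrak l_{(\cdot,\sigma)}$, $\mathfrak l_{(\cdot,\cdot)}$, with evaluation $\epsilon_{\mathfrak l_{(a,b)}}(\sigma)=Y$ if $a\sqsubseteq\sigma$,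 $N$ if $b\sqsubseteq\sigma$, $\bot$ otherwise (''$\cdot\sqsubseteq\sigma$'' false), ordered by pointwise comparison of evaluations (nonempty infima exist and are pointwise). $\overline{\mathfrak l_{(a,b)}}=\mathfrak l_{(b,a)}$, $\mathfrak Y_{\mathfrak E}=\mathfrak l_{(\bot_{\mathfrak S},\cdot)}$, $\bot_{\mathfrak E}=\mathfrak l_{(\cdot,\cdot)}$. A States/Effects Chu space $(\mathfrak S,\mathfrak E,\epsilon)$: $\mathfrak E\subseteq\mathfrak E_{\mathfrak S}$ such that (i) each $\sigma\ne\bot_{\mathfrak S}$ has some $\sigma'\ne\bot_{\mathfrak S}$ with $\mathfrak l_{(\sigma,\sigma')}\in\mathfrak E$; (ii) $\mathfrak E$ is closed under nonempty infima of $\mathfrak E_{\mathfrak S}$; (iii) closed under bar; (iv) contains $\mathfrak Y_{\mathfrak E},\bot_{\mathfrak E}$. The pure tensor $\sigma_A\widetilde{\otimes}\sigma_B$ is the map $\mathfrak E_A\times\mathfrak E_B\to\mathfrak B$, $(\mathfrak l_A,\mathfrak l_B)\mapsto\epsilon^{\mathfrak S_A}_{\mathfrak l_A}(\sigma_A)\bullet\epsilon^{\mathfrak S_B}_{\mathfrak l_B}(\sigma_B)$; the minimal tensor product $\mathfrak S_A\widetilde{\otimes}\mathfrak S_B$ is the set of pointwise infima of nonempty families of pure tensors. *)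

From Stdlib Require Import Classical ClassicalDescription.

Set Implicit Arguments.

Inductive B3 : Type := BY | BN | Bbot.

Definition B3le (u v : B3) : Prop := u = Bbot \/ u = v.

Definition bmul (x y : B3) : B3 :=
  match x, y with
  | _, BY => x
  | BY, _ => y
  | BN, _ => BN
  | _, BN => BN
  | Bbot, Bbot => Bbot
  end.

Definition bbar (x : B3) : B3 :=
  match x with BY => BN | BN => BY | Bbot => Bbot end.

(** infimum of a family of elements of B (meaningful for nonempty families):
    Y if all are Y, N if all are N, bot otherwise. *)
Definition binf (I : Type) (f : I -> B3) : B3 :=
  if excluded_middle_informative (forall i, f i = BY) then BY
  else if excluded_middle_informative (forall i, f i = BN) then BN
  else Bbot.

Record StateSpace : Type := {
  st :> Type;
  sle : st -> st -> Prop;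
  sbot : st;
  sle_refl : forall x, sle x x;
  sle_antisym : forall x y, sle x y -> sle y x -> x = y;
  sle_trans : forall x y z, sle x y -> sle y z -> sle x z;
  sbot_least : forall x, sle sbot x;
  sinf_exists : forall P : st -> Prop, (exists x, P x) ->
    exists m, (forall x, P x -> sle m x) /\
              (forall m', (forall x, P x -> sle m' x) -> sle m' m)
}.

Inductive effect (S : StateSpace) : Type :=
  | l2 : S -> S -> effect S
  | lY : S -> effect S
  | lN : S -> effect S
  | l0 : effect S.
Arguments l0 {S}.
Arguments l2 {S} _ _.
Arguments lY {S} _.
Arguments lN {S} _.

Definition effect_wf (S : StateSpace) (l : effect S) : Prop :=
  match l with
  | l2 a b => ~ (exists c, sle S a c /\ sle S b c)
  | _ => True
  end.

Definition test {S : StateSpace} (a s : S) : bool :=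
  if excluded_middle_informative (sle S a s) then true else false.

Definition eval (S : StateSpace) (l : effect S) (s : S) : B3 :=
  match l with
  | l2 a b => if test a s then BY else if test b s then BN else Bbot
  | lY a => if test a s then BY else Bbot
  | lN b => if test b s then BN else Bbot
  | l0 => Bbot
  end.

Definition ebar (S : StateSpace) (l : effect S) : effect S :=
  match l with
  | l2 a b => l2 b a
  | lY a => lN a
  | lN b => lY b
  | l0 => l0
  end.

Definition effY (S : StateSpace) : effect S := lY (sbot S).

Record ChuSpace : Type := {
  SS :> StateSpace;
  EE : effect SS -> Prop;
  EE_wf : forall l, EE l -> effect_wf l;
  EE_sep : forall s : SS, s <> sbot SS ->
     exists s' : SS, s' <> sbot SS /\ EE (l2 s s');
  EE_inf : forall P : effect SS -> Prop, (exists l, P l) ->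
     (forall l, P l -> EE l) ->
     forall m : effect SS, effect_wf m ->
       (forall s : SS, eval m s = binf (fun l : {l | P l} => eval (proj1_sig l) s)) ->
       EE m;
  EE_bar : forall l, EE l -> EE (ebar l);
  EE_Y : EE (effY SS);
  EE_0 : EE l0
}.

Definition pure_tensor {A B : ChuSpace} (sA : A) (sB : B)
  (lA : effect A) (lB : effect B) : B3 :=
  bmul (eval lA sA) (eval lB sB).

Definition in_min_tensor (A B : ChuSpace)
  (Phi : effect A -> effect B -> B3) : Prop :=
  exists (I : Type) (fA : I -> A) (fB : I -> B),
    inhabited I /\
    forall lA lB, EE A lA -> EE B lB ->
      Phi lA lB = binf (fun i => pure_tensor (fA i) (fB i) lA lB).

(** Every state satisfies [Y_E], so [Phi(l_A, Y_E) = Y] forces [l_A] to evaluate to [Y]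
    on the A-component of every pure tensor of a family whose infimum is [Phi].  Hence
    [Phi(l_A, -)] is the infimum of the evaluations on the B-components, and since the bar
    commutes both with evaluation and with nonempty infima, [Phi(l_A, bar l_B)] is the bar
    of [Phi(l_A, l_B)]. *)

From Stdlib Require Import Classical ClassicalDescription FunctionalExtensionality.

Set Implicit Arguments.
Unset Strict Implicit.

Lemma bmul_Yl (x : B3) : bmul BY x = x.
Proof. destruct x; reflexivity. Qed.

Lemma bmul_Yr (x : B3) : bmul x BY = x.
Proof. destruct x; reflexivity. Qed.

Lemma bbar_eqY (x : B3) : bbar x = BY <-> x = BN.
Proof. destruct x; simpl; split; congruence. Qed.

Lemma bbar_eqN (x : B3) : bbar x = BN <-> x = BY.
Proof. destruct x; simpl; split; congruence. Qed.

Lemma bbar_cases (x : B3) :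
  (x, bbar x) = (BY, BN) \/ (x, bbar x) = (BN, BY) \/ (x, bbar x) = (Bbot, Bbot).
Proof. destruct x; simpl; auto. Qed.

Section Infimum.

Variables (I : Type) (f : I -> B3).

Lemma eq_binf (g : I -> B3) : (forall i, f i = g i) -> binf f = binf g.
Proof. intros fg; f_equal; apply functional_extensionality, fg. Qed.

Lemma binf_Y : (forall i, f i = BY) -> binf f = BY.
Proof. intros fY; unfold binf; destruct excluded_middle_informative; tauto. Qed.

Lemma binf_N : inhabited I -> (forall i, f i = BN) -> binf f = BN.
Proof.
  intros [i0] fN; unfold binf.
  destruct excluded_middle_informative as [fY|_].
  - specialize (fY i0); rewrite fN in fY; discriminate.
  - destruct excluded_middle_informative; tauto.
Qed.

Lemma binf_bot : ~ (forall i, f i = BY) -> ~ (forall i, f i = BN) -> binf f = Bbot.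
Proof.
  intros nY nN; unfold binf.
  do 2 (destruct excluded_middle_informative; try tauto).
Qed.

Lemma binf_eqY : binf f = BY -> forall i, f i = BY.
Proof.
  unfold binf; destruct excluded_middle_informative as [fY|_]; [auto|].
  destruct excluded_middle_informative; discriminate.
Qed.

End Infimum.

Lemma binf_bbar (I : Type) (f : I -> B3) :
  inhabited I -> binf (fun i => bbar (f i)) = bbar (binf f).
Proof.
  intros hI.
  destruct (classic (forall i, f i = BY)) as [fY|nY].
  - rewrite (binf_Y fY); apply binf_N; [exact hI|].
    intro i; apply bbar_eqN, fY.
  - destruct (classic (forall i, f i = BN)) as [fN|nN].
    + rewrite (binf_N hI fN); apply binf_Y.
      intro i; apply bbar_eqY, fN.
    + rewrite (binf_bot nY nN); apply binf_bot.
      * intro barY; apply nN; intro i; apply bbar_eqY, barY.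
      * intro barN; apply nY; intro i; apply bbar_eqN, barN.
Qed.

Lemma eval_effY (S : StateSpace) (s : S) : eval (effY S) s = BY.
Proof.
  unfold effY; simpl; unfold test.
  destruct excluded_middle_informative as [_|nle]; [reflexivity|].
  destruct (nle (sbot_least S s)).
Qed.

Lemma eval_ebar (S : StateSpace) (l : effect S) (s : S) :
  effect_wf l -> eval (ebar l) s = bbar (eval l s).
Proof.
  destruct l as [a b|a|b|]; simpl; intros wf; unfold test;
    repeat destruct excluded_middle_informative; simpl; auto.
  destruct wf; exists s; auto.
Qed.

Section PureTensor.

Variables (A B : ChuSpace) (sA : A) (sB : B).

Lemma pure_tensor_effY (lA : effect A) : pure_tensor sA sB lA (effY B) = eval lA sA.
Proof. unfold pure_tensor; rewrite eval_effY; apply bmul_Yr. Qed.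

Lemma pure_tensor_Yl (lA : effect A) (lB : effect B) :
  eval lA sA = BY -> pure_tensor sA sB lA lB = eval lB sB.
Proof. intros lAY; unfold pure_tensor; rewrite lAY; apply bmul_Yl. Qed.

End PureTensor.

Theorem mainTheorem19 (A B : ChuSpace) (Phi : effect A -> effect B -> B3)
  (hPhi : in_min_tensor A B Phi) (lA : effect A) (hlA : EE A lA)
  (hY : Phi lA (effY B) = BY) :
  forall lB : effect B, EE B lB ->
    (Phi lA lB, Phi lA (ebar lB)) = (BY, BN) \/
    (Phi lA lB, Phi lA (ebar lB)) = (BN, BY) \/
    (Phi lA lB, Phi lA (ebar lB)) = (Bbot, Bbot).
Proof.
  intros lB hlB.
  destruct hPhi as (I & fA & fB & hI & hPhi).
  assert (lA_Y : forall i, eval lA (fA i) = BY).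
  { intro i; rewrite <- (pure_tensor_effY (fA i) (fB i)); revert i.
    apply binf_eqY; rewrite <- hPhi; [exact hY | exact hlA | apply EE_Y]. }
  assert (Phi_B : forall l, EE B l -> Phi lA l = binf (fun i => eval l (fB i))).
  { intros l hl; rewrite (hPhi _ _ hlA hl).
    apply eq_binf; intro i; apply pure_tensor_Yl, lA_Y. }
  assert (Phi_bar : Phi lA (ebar lB) = bbar (Phi lA lB)).
  { rewrite (Phi_B _ (EE_bar B _ hlB)), (Phi_B _ hlB), <- binf_bbar by exact hI.
    apply eq_binf; intro i; apply eval_ebar, (EE_wf B), hlB. }
  rewrite Phi_bar; apply bbar_cases.
Qed.
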